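(* The set $\{G\in\mathcal{C}(\mathbb{T}^{\mathbb{N}}): G \text{ is torsion-free}\}$ is a $G_\delta$ subset of $\mathcal{C}(\mathbb{T}^{\mathbb{N}})$.
   Context: Let $\mathbb{T}=\mathbb{R}/\mathbb{Z}$ with its usual metric $d_{\mathbb{T}}$ (diameter $1/2$), and $\mathbb{T}^{\mathbb{N}}$ with metric $d(x,y)=\sum_{n=0}^\infty 2^{-n}d_{\mathbb{T}}(x(n),y(n))$. $\mathcal{C}(\mathbb{T}^{\mathbb{N}})$ is the set of nonempty compact connected subgroups of $\mathbb{T}^{\mathbb{N}}$ with the Hausdorff metric induced by $d$. *)

From Stdlib Require Import Reals Lra List.
From Coquelicot Require Import Coquelicot.
Open Scope R_scope.

(* The circle T = R/Z, represented by the canonical representatives in [0,1). *)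
Definition torus := {r : R | 0 <= r < 1}.
Definition tval (a : torus) : R := proj1_sig a.

Lemma frac_part_range (r : R) : 0 <= frac_part r < 1.
Proof. destruct (base_fp r); lra. Qed.

Definition tproj (r : R) : torus := exist _ (frac_part r) (frac_part_range r).
Definition tadd (a b : torus) : torus := tproj (tval a + tval b).
Definition tneg (a : torus) : torus := tproj (- tval a).
Definition tzero : torus := tproj 0.

(* usual metric on T: distance from a-b to the nearest integer (diameter 1/2) *)
Definition dT (a b : torus) : R :=
  let f := frac_part (tval a - tval b) in Rmin f (1 - f).

Definition point := nat -> torus.
Definition padd (x y : point) : point := fun k => tadd (x k) (y k).
Definition pneg (x : point) : point := fun k => tneg (x k).
Definition pzero : point := fun _ => tzero.
Fixpoint pnmul (n : nat) (x : point) : point :=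
  match n with O => pzero | S m => padd x (pnmul m x) end.
Definition peq (x y : point) : Prop := forall k, tval (x k) = tval (y k).

Definition dist (x y : point) : R :=
  Series (fun n => (/ 2) ^ n * dT (x n) (y n)).

Definition pset := point -> Prop.

Definition is_open_set (U : pset) : Prop :=
  forall x, U x -> exists eps, 0 < eps /\ forall y, dist x y < eps -> U y.

Definition is_compact (K : pset) : Prop :=
  forall (I : Type) (U : I -> pset),
    (forall i, is_open_set (U i)) ->
    (forall x, K x -> exists i, U i x) ->
    exists l : list I, forall x, K x -> exists i, In i l /\ U i x.

Definition is_connected (K : pset) : Prop :=
  ~ (exists U V : pset, is_open_set U /\ is_open_set V /\
       (forall x, K x -> U x \/ V x) /\
       (exists x, K x /\ U x) /\ (exists x, K x /\ V x) /\
       (forall x, K x -> U x -> V x -> False)).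

Definition is_subgroup (G : pset) : Prop :=
  G pzero /\ forall x y, G x -> G y -> G (padd x (pneg y)).

Definition in_C (G : pset) : Prop :=
  (exists x, G x) /\ is_compact G /\ is_connected G /\ is_subgroup G.

Definition torsion_free (G : pset) : Prop :=
  forall x, G x -> forall n : nat, (0 < n)%nat -> peq (pnmul n x) pzero -> peq x pzero.

Definition inf_dist (x : point) (B : pset) : R :=
  real (Glb_Rbar (fun r => exists b, B b /\ r = dist x b)).
Definition hdist (A B : pset) : R :=
  Rmax (real (Lub_Rbar (fun r => exists a, A a /\ r = inf_dist a B)))
       (real (Lub_Rbar (fun r => exists b, B b /\ r = inf_dist b A))).

Definition C_open (U : pset -> Prop) : Prop :=
  forall G, in_C G -> U G ->
    exists eps, 0 < eps /\ forall H, in_C H -> hdist G H < eps -> U H.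

Definition Gdelta_in_C (P : pset -> Prop) : Prop :=
  exists U : nat -> (pset -> Prop),
    (forall n, C_open (U n)) /\
    (forall G, in_C G -> (P G <-> forall n, U n G)).

From Pilot Require Import Defs.
From Stdlib Require Import Reals Lra Lia ZArith List Classical Cantor.
From Coquelicot Require Import Coquelicot.
Open Scope R_scope.

(* For n > 0 and r > 0 call a point y "r-far n-torsion" if n·y = 0 and
   d(y, 0) >= r.  A group G is torsion-free iff, for all n and k, G contains
   no (1/(k+1))-far n-torsion point; this writes the property as a countable
   intersection.  Each of these sets is open in (C(T^N), Hausdorff metric):
   the set F of far torsion points is closed (n·_ is Lipschitz, so n·y ≠ 0 is
   an open condition), a compact G disjoint from the closed F stays at a
   positive distance eps from it, and every H with hdist G H < eps lies in the
   eps-neighbourhood of G, hence misses F as well. *)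

(* [Defs.dist] is shadowed by the Stdlib metric-space [dist]. *)
Notation pdist := Pilot.Defs.dist.

Definition znorm (t : R) : R := Rmin (frac_part t) (1 - frac_part t).

Lemma znorm_le_int (t : R) (z : Z) : znorm t <= Rabs (t - IZR z).
Proof.
  pose proof (Rplus_Int_part_frac_part t) as Ht.
  pose proof (base_fp t) as [Hf0 Hf1].
  pose proof (Rle_abs (t - IZR z)) as A1.
  pose proof (Rle_abs (- (t - IZR z))) as A2. rewrite Rabs_Ropp in A2.
  unfold znorm.
  destruct (Z_le_gt_dec z (Int_part t)) as [Hz|Hz].
  - apply IZR_le in Hz. pose proof (Rmin_l (frac_part t) (1 - frac_part t)). lra.
  - assert (Hz' : (Int_part t + 1 <= z)%Z) by lia.
    apply IZR_le in Hz'. rewrite plus_IZR in Hz'.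
    pose proof (Rmin_r (frac_part t) (1 - frac_part t)). simpl in Hz'. lra.
Qed.

Lemma znorm_attained (t : R) : exists z, znorm t = Rabs (t - IZR z).
Proof.
  pose proof (Rplus_Int_part_frac_part t) as Ht.
  pose proof (base_fp t) as [Hf0 Hf1].
  unfold znorm, Rmin. destruct (Rle_dec (frac_part t) (1 - frac_part t)).
  - exists (Int_part t). rewrite Rabs_pos_eq; lra.
  - exists (Int_part t + 1)%Z. rewrite plus_IZR. simpl. rewrite Rabs_left1; lra.
Qed.

Lemma znorm_bounds (t : R) : 0 <= znorm t <= / 2.
Proof. pose proof (base_fp t). unfold znorm, Rmin. destruct Rle_dec; lra. Qed.

Lemma znorm_opp (t : R) : znorm (- t) = znorm t.
Proof.
  apply Rle_antisym.
  - destruct (znorm_attained t) as [z ->].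
    pose proof (znorm_le_int (- t) (- z)) as H. rewrite opp_IZR in H.
    replace (- t - - IZR z) with (- (t - IZR z)) in H by ring.
    rewrite Rabs_Ropp in H. exact H.
  - destruct (znorm_attained (- t)) as [z ->].
    pose proof (znorm_le_int t (- z)) as H. rewrite opp_IZR in H.
    replace (t - - IZR z) with (- (- t - IZR z)) in H by ring.
    rewrite Rabs_Ropp in H. exact H.
Qed.

Lemma znorm_add_int (t : R) (z : Z) : znorm (t + IZR z) = znorm t.
Proof.
  apply Rle_antisym.
  - destruct (znorm_attained t) as [w ->].
    pose proof (znorm_le_int (t + IZR z) (w + z)) as H. rewrite plus_IZR in H.
    replace (t + IZR z - (IZR w + IZR z)) with (t - IZR w) in H by ring. exact H.
  - destruct (znorm_attained (t + IZR z)) as [w ->].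
    pose proof (znorm_le_int t (w - z)) as H. rewrite minus_IZR in H.
    replace (t - (IZR w - IZR z)) with (t + IZR z - IZR w) in H by ring. exact H.
Qed.

Lemma znorm_triangle (s t : R) : znorm (s + t) <= znorm s + znorm t.
Proof.
  destruct (znorm_attained s) as [a ->]. destruct (znorm_attained t) as [b ->].
  pose proof (znorm_le_int (s + t) (a + b)) as H. rewrite plus_IZR in H.
  replace (s + t - (IZR a + IZR b)) with ((s - IZR a) + (t - IZR b)) in H by ring.
  pose proof (Rabs_triang (s - IZR a) (t - IZR b)). lra.
Qed.

Lemma znorm_zero_int (t : R) : znorm t = 0 -> exists z, t = IZR z.
Proof.
  intros H. destruct (znorm_attained t) as [z Hz]. exists z.
  rewrite H in Hz. symmetry in Hz. apply Rabs_eq_0 in Hz. lra.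
Qed.

Lemma znorm_0 : znorm 0 = 0.
Proof.
  pose proof (znorm_le_int 0 0) as H. pose proof (znorm_bounds 0).
  replace (0 - IZR 0) with 0 in H by (simpl; ring). rewrite Rabs_R0 in H. lra.
Qed.

Lemma dT_znorm (a b : torus) : dT a b = znorm (tval a - tval b).
Proof. reflexivity. Qed.

Lemma tval_range (a : torus) : 0 <= tval a < 1.
Proof. destruct a; simpl; auto. Qed.

Lemma tval_tadd (a b : torus) : exists z, tval (tadd a b) = tval a + tval b + IZR z.
Proof.
  exists (- Int_part (tval a + tval b))%Z.
  unfold tadd, tproj, tval at 1; simpl. unfold frac_part. rewrite opp_IZR. ring.
Qed.

Lemma dT_bounds (a b : torus) : 0 <= dT a b <= / 2.
Proof. apply znorm_bounds. Qed.

Lemma dT_sym (a b : torus) : dT a b = dT b a.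
Proof. rewrite !dT_znorm, <- znorm_opp. f_equal; ring. Qed.

Lemma dT_triangle (a b c : torus) : dT a c <= dT a b + dT b c.
Proof.
  rewrite !dT_znorm.
  replace (tval a - tval c) with ((tval a - tval b) + (tval b - tval c)) by ring.
  apply znorm_triangle.
Qed.

Lemma dT_eq (a b : torus) : tval a = tval b -> dT a b = 0.
Proof.
  intros H. rewrite dT_znorm, H. replace (tval b - tval b) with 0 by ring. apply znorm_0.
Qed.

Lemma dT_zero (a b : torus) : dT a b = 0 -> tval a = tval b.
Proof.
  rewrite dT_znorm. intros H. apply znorm_zero_int in H as [z Hz].
  pose proof (tval_range a). pose proof (tval_range b).
  assert (z = 0%Z) by (apply one_IZR_lt1; lra). subst z. simpl in Hz. lra.
Qed.

Lemma dT_tadd (a b c d : torus) : dT (tadd a b) (tadd c d) <= dT a c + dT b d.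
Proof.
  destruct (tval_tadd a b) as [z1 H1]. destruct (tval_tadd c d) as [z2 H2].
  rewrite !dT_znorm, H1, H2.
  replace (tval a + tval b + IZR z1 - (tval c + tval d + IZR z2)) with
    ((tval a - tval c) + (tval b - tval d) + IZR (z1 - z2)) by (rewrite minus_IZR; ring).
  rewrite znorm_add_int. apply znorm_triangle.
Qed.

Lemma dT_pnmul (n : nat) (x y : point) (k : nat) :
  dT (pnmul n x k) (pnmul n y k) <= INR n * dT (x k) (y k).
Proof.
  induction n as [|n IH]; simpl pnmul.
  - rewrite dT_eq by reflexivity. simpl; lra.
  - unfold padd. eapply Rle_trans; [apply dT_tadd|]. rewrite S_INR. lra.
Qed.

Lemma Series_nonneg (a : nat -> R) : (forall n, 0 <= a n) -> ex_series a -> 0 <= Series a.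
Proof.
  intros Ha He. replace 0 with (Series (fun n => 0 * a n)).
  - apply Series_le; [intros n; specialize (Ha n); lra | exact He].
  - rewrite Series_scal_l. ring.
Qed.

Lemma Series_ge_term (a : nat -> R) (j : nat) :
  (forall n, 0 <= a n) -> ex_series a -> a j <= Series a.
Proof.
  intros Ha He.
  rewrite (Series_incr_n a (S j)); [| apply Nat.lt_0_succ | exact He]. simpl pred.
  assert (Htail : 0 <= Series (fun k => a (S j + k)%nat)).
  { apply Series_nonneg; [intros; apply Ha | apply (ex_series_incr_n a (S j)); exact He]. }
  destruct j as [|j].
  - change (sum_f_R0 a 0) with (a 0%nat). lra.
  - change (sum_f_R0 a (S j)) with (sum_f_R0 a j + a (S j)).
    pose proof (cond_pos_sum a j Ha). lra.
Qed.

Lemma geom_half_ex : ex_series (fun n => (/ 2) ^ n).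
Proof. apply ex_series_geom. rewrite Rabs_pos_eq; lra. Qed.

Lemma dist_term_bounds (x y : point) (n : nat) :
  0 <= (/ 2) ^ n * dT (x n) (y n) <= (/ 2) ^ n.
Proof.
  pose proof (dT_bounds (x n) (y n)).
  assert (0 < (/ 2) ^ n) by (apply pow_lt; lra). split; nra.
Qed.

(* The series defining [dist] converges, so [Series] computes its true sum. *)
Lemma dist_ex_series (x y : point) : ex_series (fun n => (/ 2) ^ n * dT (x n) (y n)).
Proof.
  apply (@ex_series_le R_AbsRing R_CompleteNormedModule) with (fun n => (/ 2) ^ n);
    [| apply geom_half_ex].
  intros n. change (norm ((/ 2) ^ n * dT (x n) (y n)))
    with (Rabs ((/ 2) ^ n * dT (x n) (y n))).
  pose proof (dist_term_bounds x y n). rewrite Rabs_pos_eq; lra.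
Qed.

Lemma dist_bounds (x y : point) : 0 <= pdist x y <= 2.
Proof.
  split.
  - apply Series_nonneg; [intros; apply dist_term_bounds | apply dist_ex_series].
  - apply Rle_trans with (Series (fun n => (/ 2) ^ n)).
    + apply Series_le; [intros; apply dist_term_bounds | apply geom_half_ex].
    + right. apply is_series_unique.
      assert (Hq : Rabs (/ 2) < 1) by (rewrite Rabs_pos_eq; lra).
      pose proof (is_series_geom (/ 2) Hq) as Hg.
      replace (/ (1 - / 2)) with 2 in Hg by field. exact Hg.
Qed.

Lemma dist_sym (x y : point) : pdist x y = pdist y x.
Proof. apply Series_ext; intros; rewrite dT_sym; reflexivity. Qed.

Lemma dist_triangle (x y z : point) : pdist x z <= pdist x y + pdist y z.
Proof.
  unfold Pilot.Defs.dist. rewrite <- Series_plus by apply dist_ex_series.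
  apply Series_le.
  - intros n. pose proof (dist_term_bounds x z n).
    pose proof (dT_triangle (x n) (y n) (z n)).
    assert (0 < (/ 2) ^ n) by (apply pow_lt; lra). split; [lra | nra].
  - exact (@ex_series_plus R_AbsRing R_NormedModule _ _
             (dist_ex_series x y) (dist_ex_series y z)).
Qed.

Lemma dist_peq (x y : point) : peq x y -> pdist x y = 0.
Proof.
  intros H. unfold Pilot.Defs.dist.
  rewrite (Series_ext _ (fun n => 0 * (/ 2) ^ n)).
  - rewrite Series_scal_l. ring.
  - intros n. rewrite dT_eq by apply H. ring.
Qed.

Lemma dist_zero (x y : point) : pdist x y = 0 -> peq x y.
Proof.
  intros H k. apply dT_zero.
  pose proof (Series_ge_term _ k (fun n => proj1 (dist_term_bounds x y n))
                (dist_ex_series x y)) as Hk.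
  fold (pdist x y) in Hk. rewrite H in Hk.
  assert (0 < (/ 2) ^ k) by (apply pow_lt; lra).
  pose proof (dT_bounds (x k) (y k)). nra.
Qed.

Lemma dist_pnmul (n : nat) (x y : point) :
  pdist (pnmul n x) (pnmul n y) <= INR n * pdist x y.
Proof.
  unfold Pilot.Defs.dist. rewrite <- Series_scal_l. apply Series_le.
  - intros k. pose proof (dist_term_bounds (pnmul n x) (pnmul n y) k).
    pose proof (dT_pnmul n x y k).
    assert (0 < (/ 2) ^ k) by (apply pow_lt; lra). split; [lra | nra].
  - apply (@ex_series_ext R_AbsRing R_NormedModule
             (fun k => ((/ 2) ^ k * dT (x k) (y k)) * INR n)).
    + intros; simpl; ring.
    + apply ex_series_scal_r, dist_ex_series.
Qed.

Lemma nonzero_multiple_open (n : nat) (x : point) :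
  ~ peq (pnmul n x) pzero ->
  exists e, 0 < e /\ forall y, pdist x y < e -> ~ peq (pnmul n y) pzero.
Proof.
  intros Hx.
  assert (Hn : 0 < INR n).
  { apply lt_0_INR. destruct n as [|n]; [exfalso; apply Hx; intro; reflexivity | lia]. }
  assert (Hd : 0 < pdist (pnmul n x) pzero).
  { destruct (dist_bounds (pnmul n x) pzero) as [[Hd|Hd] _]; [exact Hd |].
    exfalso. apply Hx, dist_zero. auto. }
  exists (pdist (pnmul n x) pzero / INR n). split; [apply Rdiv_lt_0_compat; lra |].
  intros y Hy Hyn.
  assert (Hlip : INR n * pdist x y < pdist (pnmul n x) pzero).
  { apply (Rmult_lt_compat_l (INR n)) in Hy; [| exact Hn].
    field_simplify in Hy; lra. }
  pose proof (dist_pnmul n x y).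
  pose proof (dist_triangle (pnmul n x) (pnmul n y) pzero) as Htri.
  rewrite (dist_peq _ _ Hyn) in Htri. lra.
Qed.

Lemma inf_dist_approx (b : point) (G : pset) : (exists g, G g) ->
  inf_dist b G <= 2 /\
  forall eps, inf_dist b G < eps -> exists g, G g /\ pdist b g < eps.
Proof.
  intros [g0 Hg0]. unfold inf_dist.
  destruct (Glb_Rbar_correct (fun r => exists g, G g /\ r = pdist b g)) as [Hlb Hglb].
  destruct (Glb_Rbar (fun r => exists g, G g /\ r = pdist b g)) as [m| |].
  - assert (H1 : Rbar_le m (pdist b g0)) by (apply Hlb; eauto).
    simpl in H1 |- *. pose proof (dist_bounds b g0). split; [lra |].
    intros eps Heps. apply NNPP. intros Hno.
    assert (H2 : Rbar_le eps m).
    { apply Hglb. intros r [g [Hg ->]]. simpl.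
      apply Rnot_lt_le. intros Hlt. apply Hno; eauto. }
    simpl in H2. lra.
  - exfalso. assert (H1 : Rbar_le p_infty (pdist b g0)) by (apply Hlb; eauto).
    exact H1.
  - exfalso. assert (H0 : Rbar_le 0 m_infty).
    { apply Hglb. intros r [g [_ ->]]. simpl. apply dist_bounds. }
    exact H0.
Qed.

Lemma hdist_close (G H : pset) (eps : R) : (exists g, G g) -> (exists h, H h) ->
  hdist G H < eps -> forall h, H h -> exists g, G g /\ pdist h g < eps.
Proof.
  intros HG [h0 Hh0] Hd h Hh. unfold hdist in Hd.
  pose proof (Rmax_r (real (Lub_Rbar (fun r => exists a, G a /\ r = inf_dist a H)))
                     (real (Lub_Rbar (fun r => exists b, H b /\ r = inf_dist b G)))) as Hm.
  destruct (Lub_Rbar_correct (fun r => exists b, H b /\ r = inf_dist b G)) as [Hub Hlub].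
  destruct (Lub_Rbar (fun r => exists b, H b /\ r = inf_dist b G)) as [l| |].
  - assert (H1 : Rbar_le (inf_dist h G) l) by (apply Hub; eauto). simpl in H1, Hm.
    apply (inf_dist_approx h G HG). cbn [real] in Hd, Hm. lra.
  - exfalso. assert (H2 : Rbar_le p_infty 2).
    { apply Hlub. intros r [b [Hb ->]]. simpl. apply (inf_dist_approx b G HG). }
    exact H2.
  - exfalso. assert (H1 : Rbar_le (inf_dist h0 G) m_infty) by (apply Hub; eauto).
    exact H1.
Qed.

Definition closed_set (F : pset) : Prop :=
  forall x, ~ F x -> exists e, 0 < e /\ forall y, pdist x y < e -> ~ F y.

Definition free_ball (F : pset) : Type :=
  {p : point * R | 0 < snd p /\ forall y, pdist (fst p) y < snd p -> ~ F y}.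

Lemma free_balls_min_radius (F : pset) (l : list (free_ball F)) :
  exists eps, 0 < eps /\ forall i, In i l -> eps <= snd (proj1_sig i) / 2.
Proof.
  induction l as [|i l [e [He Hl]]].
  - exists 1. split; [lra | intros i []].
  - exists (Rmin e (snd (proj1_sig i) / 2)). split.
    + destruct (proj2_sig i) as [Hr _]. apply Rmin_pos; lra.
    + intros j [Hj|Hj]; [subst j; apply Rmin_r |].
      eapply Rle_trans; [apply Rmin_l | auto].
Qed.

(* A compact set disjoint from a closed set F is at positive distance from F
   (Lebesgue number argument on the cover by half-size F-free balls). *)
Lemma compact_separated (K F : pset) : is_compact K -> closed_set F ->
  (forall x, K x -> ~ F x) ->
  exists eps, 0 < eps /\ forall x y, K x -> pdist x y < eps -> ~ F y.
Proof.
  intros Hc HF HKF.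
  destruct (Hc (free_ball F)
              (fun i y => pdist (fst (proj1_sig i)) y < snd (proj1_sig i) / 2))
    as [l Hl].
  - intros [[x r] Hball] y Hy. simpl in *. exists (r / 2 - pdist x y). split; [lra |].
    intros z Hz. pose proof (dist_triangle x y z). lra.
  - intros x Hx. destruct (HF x (HKF x Hx)) as [e [He Hfree]].
    exists (exist _ (x, e) (conj He Hfree)). simpl.
    rewrite dist_peq by (intro; reflexivity). lra.
  - destruct (free_balls_min_radius F l) as [eps [Heps Hmin]].
    exists eps. split; [exact Heps |].
    intros x y Hx Hxy. destruct (Hl x Hx) as [i [Hi Hu]]. specialize (Hmin i Hi).
    destruct i as [[z r] [Hr Hfree]]. simpl in *. apply Hfree.
    pose proof (dist_triangle z x y). lra.
Qed.

Lemma avoiding_C_open (F : pset) : closed_set F ->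
  C_open (fun G => forall x, G x -> ~ F x).
Proof.
  intros HF G [HGne [HGc _]] HGF.
  destruct (compact_separated G F HGc HF HGF) as [eps [Heps Hsep]].
  exists eps. split; [exact Heps |].
  intros H [HHne _] Hd h Hh.
  destruct (hdist_close G H eps HGne HHne Hd h Hh) as [g [Hg Hgh]].
  apply (Hsep g h Hg). rewrite dist_sym. exact Hgh.
Qed.

Definition far_torsion (n : nat) (r : R) (y : point) : Prop :=
  (0 < n)%nat /\ peq (pnmul n y) pzero /\ r <= pdist y pzero.

Lemma far_torsion_closed (n : nat) (r : R) : closed_set (far_torsion n r).
Proof.
  intros x Hx.
  destruct (classic (peq (pnmul n x) pzero)) as [Hp|Hp].
  - destruct (Nat.eq_dec n 0) as [->|Hn].
    + exists 1. split; [lra |]. intros y _ [Hc _]. lia.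
    + assert (Hr : pdist x pzero < r).
      { apply Rnot_le_lt. intros Hr. apply Hx. repeat split; auto; lia. }
      exists (r - pdist x pzero). split; [lra |].
      intros y Hy [_ [_ Hry]].
      pose proof (dist_triangle y x pzero). rewrite (dist_sym y x) in *. lra.
  - destruct (nonzero_multiple_open n x Hp) as [e [He Hnz]].
    exists e. split; [exact He |]. intros y Hy [_ [Hpy _]]. exact (Hnz y Hy Hpy).
Qed.

Lemma torsion_free_iff_no_far_torsion (G : pset) :
  torsion_free G <-> forall n k x, G x -> ~ far_torsion n (/ INR (S k)) x.
Proof.
  split.
  - intros Ht n k x Hx [Hn [Hp Hr]].
    rewrite (dist_peq x pzero (Ht x Hx n Hn Hp)) in Hr.
    assert (0 < / INR (S k)) by (apply Rinv_0_lt_compat, lt_0_INR; lia). lra.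
  - intros Hno x Hx n Hn Hp. apply dist_zero.
    destruct (dist_bounds x pzero) as [[Hd|Hd] _]; [| auto].
    exfalso. destruct (archimed_cor1 _ Hd) as [[|k] [Hk Hpos]]; [lia |].
    apply (Hno n k x Hx). repeat split; auto. lra.
Qed.

Lemma Gdelta_of_double_family (P : pset -> Prop) (U : nat -> nat -> pset -> Prop) :
  (forall n k, C_open (U n k)) ->
  (forall G, in_C G -> (P G <-> forall n k, U n k G)) ->
  Gdelta_in_C P.
Proof.
  intros HU HP.
  exists (fun m => U (fst (Cantor.of_nat m)) (snd (Cantor.of_nat m))). split.
  - intros m. apply HU.
  - intros G HG. rewrite (HP G HG). split.
    + intros Hall m. apply Hall.
    + intros Hall n k. specialize (Hall (Cantor.to_nat (n, k))).
      rewrite Cantor.cancel_of_to in Hall. exact Hall.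
Qed.

Theorem mainTheorem6 : Gdelta_in_C torsion_free.
Proof.
  apply (Gdelta_of_double_family torsion_free
           (fun n k G => forall x, G x -> ~ far_torsion n (/ INR (S k)) x)).
  - intros n k. apply avoiding_C_open, far_torsion_closed.
  - intros G _. apply torsion_free_iff_no_far_torsion.
Qed.
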